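(* Let $\mathcal N$ be an NDCS network with parties $A_1,\dots,A_n$, let $p$ be the output distribution of a causally consistent model on $\mathcal N$ (finite output alphabets), and let $f_i$ be arbitrary complex-valued functions of the outputs $a_i$. Then for every twisted Gram matrix $W$ (for any $d$, any vectors $\ket{\psi_1},\dots,\ket{\psi_n}\in\mathbb C^d$ and any permutations $\pi_i^\alpha$), the Schur product $\mathcal C(f_1,\dots,f_n)\circ W$ is positive semidefinite.
   Context: A network $\mathcal N$ is a bipartite graph between sources $S_\alpha$ and parties $A_i$ ($i=1,\dots,n$); $\alpha\to i$ means $S_\alpha$ is adjacent to $A_i$; no isolated vertices, and no two sources with comparable sets of adjacent parties. $\mathcal N$ is NDCS if any two distinct parties have at most one common adjacent source. Covariance matrix: $\mathcal C(f_1,\dots,f_n)_{ij}=\mathbb E[\bar f_i f_j]-\mathbb E[\bar f_i]\,\mathbb E[f_j]$. The Schur product is $(M\circ N)_{ij}=M_{ij}N_{ij}$. Twisted Gram matrix: given $d$, vectors $\ket{\psi_1},\dots,\ket{\psi_n}\in\mathbb C^d$, and for every pair $(\alpha,i)$ with $\alpha\to i$ a permutation $\pi_i^\alpha$ of $\{1,\dots,d\}$ with permutation matrix $P_{\pi_i^\alpha}$ ($P_{\pi}\ket x=\ket{\pi(x)}$), a twisted Gram matrix is an $n\times n$ Hermitian matrix $W$ with $W_{ii}=\langle\psi_i|\psi_i\rangle$ and $W_{ij}=\bra{\psi_i}P_{\pi_i^\alpha}^\dagger P_{\pi_j^\alpha}\ket{\psi_j}$ whenever $i\neq j$ and $\alpha\to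 i,j$ (well-defined by NDCS); entries $W_{ij}$ with $i\neq j$ sharing no source are arbitrary (subject to $W$ being Hermitian). Non-fanout inflation of order $d\ge 2$: choose, for every pair $(\alpha,i)$ with $\alpha\to i$, a permutation $\pi_i^\alpha$ of $\{1,\dots,d\}$. The inflated network has parties $A_i^{(k)}$ and sources $S_\alpha^{(k)}$ ($1\le k\le d$), with $S_\alpha^{(k)}$ adjacent to $A_i^{((\pi_i^\alpha)^{-1}(k))}$ whenever $\alpha\to i$, and no other adjacencies. Causally consistent model on $\mathcal N$: a joint distribution $p(a_1,\dots,a_n)$ of the outputs of $\mathcal N$ together with, for every non-fanout inflation of every order $d\ge2$, a joint distribution of the outputs $a_i^{(k)}$ of its parties, such that: (C0) if $A_i\neq A_j$ share no source in $\mathcal N$, then $p(a_i,a_j)=p(a_i)p(a_j)$; (C1) in every inflation, each $a_i^{(k)}$ has marginal $p(a_i)$, and if $A_i^{(k)}$ and $A_j^{(l)}$ with $i\neq j$ share a source in the inflation, then $(a_i^{(k)},a_j^{(l)})$ has joint distribution $p(a_i,a_j)$; (C2) in every inflation, if two distinct parties share no source, the joint distribution of their outputs is the product of their marginals. *)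

From HB Require Import structures.
From mathcomp Require Import all_boot all_order all_algebra all_fingroup.
From mathcomp Require Import reals complex.
Set Implicit Arguments. Unset Strict Implicit. Unset Printing Implicit Defensive.
Import Order.TTheory GRing.Theory Num.Theory.
Local Open Scope ring_scope.

(* A network with m sources and n parties: adj a i <=> S_a -> A_i.          *)
Definition network (m n : nat) (adj : 'I_m -> 'I_n -> bool) : Prop :=
  [/\ (forall a : 'I_m, exists i : 'I_n, adj a i),
      (forall i : 'I_n, exists a : 'I_m, adj a i) &
      (forall a b : 'I_m, a != b -> ~ (forall i, adj a i -> adj b i))].

Definition NDCS (m n : nat) (adj : 'I_m -> 'I_n -> bool) : Prop :=
  forall (i j : 'I_n) (a b : 'I_m), i != j ->
    adj a i -> adj a j -> adj b i -> adj b j -> a = b.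

Definition share_src (m n : nat) (adj : 'I_m -> 'I_n -> bool) (i j : 'I_n) : bool :=
  [exists a, adj a i && adj a j].

(* Non-fanout inflation of order d given by permutations pi a i = pi_i^a   *)
(* (values at non-adjacent pairs are irrelevant).  Party A_i^(k) is (i,k).  *)
(* S_a^(k) is adjacent to A_i^(l) iff adj a i and pi a i l = k, so two      *)
(* inflated parties share a source iff the following holds.                 *)
Definition infl_share (m n d : nat) (adj : 'I_m -> 'I_n -> bool)
  (pi : 'I_m -> 'I_n -> {perm 'I_d}) (x y : 'I_n * 'I_d) : bool :=
  [exists a, [&& adj a x.1, adj a y.1 & pi a x.1 x.2 == pi a y.1 y.2]].

Section Dist.
Variables (R : realType) (O X : finType).

Definition is_dist (q : {ffun X -> O} -> R) : Prop :=
  (forall w, 0 <= q w) /\ \sum_w q w = 1.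

Definition marg1 (q : {ffun X -> O} -> R) (x : X) (a : O) : R :=
  \sum_(w : {ffun X -> O} | w x == a) q w.

Definition marg2 (q : {ffun X -> O} -> R) (x y : X) (a b : O) : R :=
  \sum_(w : {ffun X -> O} | (w x == a) && (w y == b)) q w.
End Dist.

Definition causally_consistent (R : realType) (O : finType) (m n : nat)
  (adj : 'I_m -> 'I_n -> bool) (p : {ffun 'I_n -> O} -> R) : Prop :=
  is_dist p /\
  (* (C0) *)
  (forall i j : 'I_n, i != j -> ~~ share_src adj i j ->
     forall a b, marg2 p i j a b = marg1 p i a * marg1 p j b) /\
  (forall d : nat, (2 <= d)%N -> forall pi : 'I_m -> 'I_n -> {perm 'I_d},
     exists q : {ffun 'I_n * 'I_d -> O} -> R,
       is_dist q /\
       (* (C1) *)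
       (forall (x : 'I_n * 'I_d) a, marg1 q x a = marg1 p x.1 a) /\
       (forall (x y : 'I_n * 'I_d), x.1 != y.1 -> infl_share adj pi x y ->
          forall a b, marg2 q x y a b = marg2 p x.1 y.1 a b) /\
       (* (C2) *)
       (forall (x y : 'I_n * 'I_d), x != y -> ~~ infl_share adj pi x y ->
          forall a b, marg2 q x y a b = marg1 q x a * marg1 q y b)).

Section Mx.
Variable R : realType.
Local Notation C := R[i].
Local Open Scope complex_scope.

Definition expect (n : nat) (O : finType) (p : {ffun 'I_n -> O} -> R)
  (g : {ffun 'I_n -> O} -> C) : C :=
  \sum_(w : {ffun 'I_n -> O}) (p w)%:C * g w.

Definition covmx (n : nat) (O : finType) (p : {ffun 'I_n -> O} -> R)
  (f : 'I_n -> O -> C) : 'M[C]_n :=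
  \matrix_(i, j) (expect p (fun w => (f i (w i))^* * f j (w j))
                  - (expect p (fun w => f i (w i)))^* * expect p (fun w => f j (w j))).

Definition schur (n : nat) (M N : 'M[C]_n) : 'M[C]_n := \matrix_(i, j) (M i j * N i j).

Definition mxadj (k l : nat) (M : 'M[C]_(k, l)) : 'M[C]_(l, k) := (map_mx Num.conj M)^T.

Definition Pmx (d : nat) (s : {perm 'I_d}) : 'M[C]_d := \matrix_(y, x) (y == s x)%:R.

Definition psd (n : nat) (M : 'M[C]_n) : Prop :=
  forall v : 'cV[C]_n, 0 <= (mxadj v *m M *m v) 0 0.

Definition hermitian (n : nat) (M : 'M[C]_n) : Prop :=
  forall i j, M j i = (M i j)^*.

Definition twisted_gram (m n d : nat) (adj : 'I_m -> 'I_n -> bool)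
  (psi : 'I_n -> 'cV[C]_d) (pi : 'I_m -> 'I_n -> {perm 'I_d}) (W : 'M[C]_n) : Prop :=
  [/\ hermitian W,
      (forall i, W i i = (mxadj (psi i) *m psi i) 0 0) &
      (forall (i j : 'I_n) (a : 'I_m), i != j -> adj a i -> adj a j ->
         W i j = (mxadj (psi i) *m mxadj (Pmx (pi a i)) *m Pmx (pi a j) *m psi j) 0 0)].
End Mx.

From mathcomp Require Import all_boot all_order all_algebra all_fingroup.
From mathcomp Require Import reals complex ring.
Set Implicit Arguments. Unset Strict Implicit. Unset Printing Implicit Defensive.
Import Order.TTheory GRing.Theory Num.Theory.
Local Open Scope ring_scope.
Local Open Scope complex_scope.

(* Replacing each f_i by its centred version F_i = f_i - E f_i turns the
   covariance matrix into the second-moment matrix E[F_i^* F_j].  Expanding a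
   twisted Gram entry gives W_ij = sum_{k,l} [pi_i^a k = pi_j^a l] psi_i(k)^* psi_j(l),
   and by NDCS the bracket says exactly that the inflated parties A_i^(k) and
   A_j^(l) share a source in the inflation of order d built from the pi's.  The
   marginal constraints (C1)/(C2) of the inflated model q then identify every
   term of the quadratic form v^* (C o W) v with E_q[F_i(a_i^(k))^* F_j(a_j^(l))]
   (unlinked pairs contribute 0 because centred variables are uncorrelated;
   (C0) handles parties without a common source), so the form equals
   E_q |sum_(i,k) v_i psi_i(k) F_i(a_i^(k))|^2 >= 0.  When d < 2 no inflation
   is available, but then W is of rank one, W_ij = s_i^* s_j, and the form is
   E_p |sum_i v_i s_i F_i|^2. *)

Section Expectation.
Variables (R : realType) (O X : finType).
Local Notation C := R[i].
Implicit Types (q : {ffun X -> O} -> R) (g h : {ffun X -> O} -> C).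

Definition Ex q g : C := \sum_w (q w)%:C * g w.

Lemma Ex_marg1 q (x : X) (h : O -> C) :
  Ex q (fun w => h (w x)) = \sum_a (marg1 q x a)%:C * h a.
Proof.
rewrite /Ex (partition_big (fun w : {ffun X -> O} => w x) xpredT) //=.
apply: eq_bigr => a _; rewrite /marg1 raddf_sum mulr_suml.
by apply: eq_bigr => w /eqP ->.
Qed.

Lemma Ex_marg2 q (x y : X) (h : O -> O -> C) :
  Ex q (fun w => h (w x) (w y)) = \sum_a \sum_b (marg2 q x y a b)%:C * h a b.
Proof.
rewrite /Ex (partition_big (fun w : {ffun X -> O} => (w x, w y)) xpredT) //=.
rewrite pair_big /=; apply: eq_bigr => -[a b] _ /=.
rewrite /marg2 raddf_sum mulr_suml.
apply: eq_big => w; first by rewrite xpair_eqE.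
by rewrite xpair_eqE => /andP[/eqP -> /eqP ->].
Qed.

Lemma Ex_indep q (x y : X) (h1 h2 : O -> C) :
  (forall a b, marg2 q x y a b = marg1 q x a * marg1 q y b) ->
  Ex q (fun w => h1 (w x) * h2 (w y)) =
  (\sum_a (marg1 q x a)%:C * h1 a) * (\sum_b (marg1 q y b)%:C * h2 b).
Proof.
move=> indep; rewrite (Ex_marg2 q x y (fun a b => h1 a * h2 b)) mulr_suml.
apply: eq_bigr => a _; rewrite mulr_sumr; apply: eq_bigr => b _.
by rewrite indep rmorphM /=; ring.
Qed.

Lemma Ex_cst q (c : C) : is_dist q -> Ex q (fun _ => c) = c.
Proof. by case=> _ q1; rewrite /Ex -mulr_suml -raddf_sum /= q1 mul1r. Qed.

Lemma Ex_conj q g : (Ex q g)^* = Ex q (fun w => (g w)^*).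
Proof.
rewrite /Ex rmorph_sum; apply: eq_bigr => w _.
by rewrite rmorphM; congr (_ * _); exact: conjc_real.
Qed.

Lemma Ex_sub_mean q g : is_dist q -> Ex q (fun w => g w - Ex q g) = 0.
Proof.
move=> q_dist; set e := Ex q g.
transitivity (Ex q g - Ex q (fun _ => e)); last by rewrite Ex_cst // subrr.
by rewrite /Ex -sumrB; apply: eq_bigr => w _; rewrite mulrBr.
Qed.

Lemma Ex_center q g h : is_dist q ->
  Ex q (fun w => (g w - Ex q g)^* * (h w - Ex q h)) =
  Ex q (fun w => (g w)^* * h w) - (Ex q g)^* * Ex q h.
Proof.
move=> q_dist.
have expand a b : Ex q (fun w => (g w - a)^* * (h w - b)) =
  Ex q (fun w => (g w)^* * h w) - a^* * Ex q h - Ex q (fun w => (g w)^*) * b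
  + Ex q (fun _ => a^* * b).
  rewrite /Ex !mulr_sumr mulr_suml -!sumrB -big_split /=.
  by apply: eq_bigr => w _; rewrite rmorphB; ring.
by rewrite expand Ex_cst // -Ex_conj; ring.
Qed.

(* Second-moment matrices are positive semidefinite: the form is the
   expectation of | sum_x c_x F_x |^2. *)
Lemma Ex_gram_ge0 q (F : X -> O -> C) (c : X -> C) : (forall w, 0 <= q w) ->
  0 <= \sum_x \sum_y (c x)^* * c y * Ex q (fun w => (F x (w x))^* * F y (w y)).
Proof.
move=> q_ge0.
have -> : \sum_x \sum_y (c x)^* * c y * Ex q (fun w => (F x (w x))^* * F y (w y))
   = Ex q (fun w => (\sum_x c x * F x (w x))^* * (\sum_y c y * F y (w y))).
  rewrite /Ex.
  under eq_bigr => x _ do under eq_bigr => y _ do rewrite mulr_sumr.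
  under eq_bigr => x _ do rewrite exchange_big.
  rewrite exchange_big; apply: eq_bigr => w _.
  rewrite rmorph_sum mulr_suml mulr_sumr; apply: eq_bigr => x _.
  rewrite mulr_sumr mulr_sumr; apply: eq_bigr => y _.
  by rewrite rmorphM; ring.
apply: sumr_ge0 => w _; apply: mulr_ge0; first by rewrite ler0c.
by rewrite mulrC; apply: mulcJ_ge0.
Qed.

End Expectation.

Section QuadraticForms.
Variable R : realType.
Local Notation C := R[i].

Lemma conjC_conjc (x : C) : Num.conj x = x^*.
Proof. by []. Qed.

Lemma mxadj_form (n : nat) (M : 'M[C]_n) (v : 'cV[C]_n) :
  (mxadj v *m M *m v) 0 0 = \sum_i \sum_j (v i 0)^* * v j 0 * M i j.
Proof.
rewrite mxE exchange_big; apply: eq_bigr => j _.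
rewrite mxE mulr_suml; apply: eq_bigr => i _.
by rewrite !mxE conjC_conjc; ring.
Qed.

Lemma gram_diag (d : nat) (x : 'cV[C]_d) :
  (mxadj x *m x) 0 0 = \sum_k (x k 0)^* * x k 0.
Proof. by rewrite mxE; apply: eq_bigr => k _; rewrite !mxE conjC_conjc. Qed.

Lemma sum_delta (T : finType) (k : T) (g : T -> C) :
  \sum_l (k == l)%:R * g l = g k.
Proof.
rewrite (bigD1 k) //= eqxx mul1r big1 ?addr0 // => l lk.
by rewrite eq_sym (negbTE lk) mul0r.
Qed.

Lemma gram_twisted (d : nat) (x y : 'cV[C]_d) (s t : {perm 'I_d}) :
  (mxadj x *m mxadj (Pmx R s) *m Pmx R t *m y) 0 0 =
  \sum_k \sum_l (s k == t l)%:R * (x k 0)^* * y l 0.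
Proof.
rewrite mxE exchange_big; apply: eq_bigr => l _.
rewrite mxE mulr_suml.
under [in LHS]eq_bigr => z _ do rewrite mxE !mulr_suml.
rewrite exchange_big /=; apply: eq_bigr => k _.
under eq_bigr => z _ do rewrite !mxE conjC_conjc rmorph_nat.
transitivity (\sum_z (s k == z)%:R * ((x k 0)^* * (z == t l)%:R * y l 0)).
  by apply: eq_bigr => z _; rewrite [z == s k]eq_sym; ring.
by rewrite sum_delta; ring.
Qed.

Lemma gram_diag_small (d : nat) (x y : 'cV[C]_d) : (d < 2)%N ->
  \sum_k (x k 0)^* * y k 0 = (\sum_k x k 0)^* * \sum_k y k 0.
Proof.
case: d x y => [|[|//]] x y _; first by rewrite !big_ord0 rmorph0 mul0r.
by rewrite !big_ord1.
Qed.

Lemma gram_twisted_small (d : nat) (x y : 'cV[C]_d) (s t : {perm 'I_d}) :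
  (d < 2)%N ->
  \sum_k \sum_l (s k == t l)%:R * (x k 0)^* * y l 0 =
  (\sum_k x k 0)^* * \sum_k y k 0.
Proof.
case: d s t x y => [|[|//]] s t x y _; first by rewrite !big_ord0 rmorph0 mul0r.
by rewrite !big_ord1 [s _]ord1 [t _]ord1 eqxx mul1r.
Qed.

End QuadraticForms.

Section InflationSharing.
Variables (m n d : nat) (adj : 'I_m -> 'I_n -> bool) (pi : 'I_m -> 'I_n -> {perm 'I_d}).

Lemma infl_share_src (i j : 'I_n) (k l : 'I_d) :
  infl_share adj pi (i, k) (j, l) -> share_src adj i j.
Proof.
by case/existsP=> a /and3P[ai aj _]; apply/existsP; exists a; rewrite ai aj.
Qed.

(* Distinct copies of one party never share a source: sources act through
   permutations. *)
Lemma infl_share_same_party (i : 'I_n) (k l : 'I_d) :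
  k != l -> ~~ infl_share adj pi (i, k) (i, l).
Proof.
move=> kl; apply/existsP=> -[a /and3P[_ _ /eqP /perm_inj /= eqkl]].
by rewrite eqkl eqxx in kl.
Qed.

Lemma infl_share_via (a : 'I_m) (i j : 'I_n) (k l : 'I_d) :
  NDCS adj -> i != j -> adj a i -> adj a j ->
  infl_share adj pi (i, k) (j, l) = (pi a i k == pi a j l).
Proof.
move=> ndcs ij ai aj; apply/existsP/idP => [[b /and3P[bi bj /eqP e]] | e].
  by rewrite (ndcs i j b a ij bi bj ai aj) in e; rewrite e.
by exists a; rewrite /= ai aj.
Qed.

End InflationSharing.

Section CentredModel.
Variables (R : realType) (O : finType) (n : nat).
Variables (p : {ffun 'I_n -> O} -> R) (f : 'I_n -> O -> R[i]).
Hypothesis p_dist : is_dist p.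
Local Notation C := R[i].

Definition centred (i : 'I_n) (a : O) : C := f i a - expect p (fun w => f i (w i)).

Lemma covmx_centred (i j : 'I_n) :
  covmx p f i j = Ex p (fun w => (centred i (w i))^* * centred j (w j)).
Proof.
by rewrite mxE; symmetry; exact: (Ex_center (fun w => f i (w i)) (fun w => f j (w j)) p_dist).
Qed.

Lemma centred_mean0 (i : 'I_n) : \sum_a (marg1 p i a)%:C * centred i a = 0.
Proof. by rewrite -Ex_marg1; exact: (Ex_sub_mean (fun w => f i (w i)) p_dist). Qed.

Section Moments.
Variables (X : finType) (q : {ffun X -> O} -> R).

Lemma moment_marg1 (x : X) (i : 'I_n) : (forall a, marg1 q x a = marg1 p i a) ->
  Ex q (fun w => (centred i (w x))^* * centred i (w x)) = covmx p f i i.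
Proof.
move=> qx; rewrite covmx_centred.
rewrite (Ex_marg1 q x (fun a => (centred i a)^* * centred i a)).
rewrite (Ex_marg1 p i (fun a => (centred i a)^* * centred i a)).
by apply: eq_bigr => a _; rewrite qx.
Qed.

Lemma moment_marg2 (x y : X) (i j : 'I_n) :
  (forall a b, marg2 q x y a b = marg2 p i j a b) ->
  Ex q (fun w => (centred i (w x))^* * centred j (w y)) = covmx p f i j.
Proof.
move=> qxy; rewrite covmx_centred.
rewrite (Ex_marg2 q x y (fun a b => (centred i a)^* * centred j b)).
rewrite (Ex_marg2 p i j (fun a b => (centred i a)^* * centred j b)).
by apply: eq_bigr => a _; apply: eq_bigr => b _; rewrite qxy.
Qed.

Lemma moment_indep (x y : X) (i j : 'I_n) :
  (forall b, marg1 q y b = marg1 p j b) ->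
  (forall a b, marg2 q x y a b = marg1 q x a * marg1 q y b) ->
  Ex q (fun w => (centred i (w x))^* * centred j (w y)) = 0.
Proof.
move=> qy indep; rewrite (Ex_indep (fun a => (centred i a)^*) (centred j) indep).
under [X in _ * X]eq_bigr => b _ do rewrite qy.
by rewrite centred_mean0 mulr0.
Qed.

End Moments.

Lemma covmx_unlinked (i j : 'I_n) :
  (forall a b, marg2 p i j a b = marg1 p i a * marg1 p j b) -> covmx p f i j = 0.
Proof. by move=> indep; rewrite covmx_centred; exact: moment_indep. Qed.

Section TwistedGram.
Variables (m d : nat) (adj : 'I_m -> 'I_n -> bool) (pi : 'I_m -> 'I_n -> {perm 'I_d}).
Variables (psi : 'I_n -> 'cV[C]_d) (W : 'M[C]_n).
Hypothesis p_C0 : forall i j, i != j -> ~~ share_src adj i j ->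
  forall a b, marg2 p i j a b = marg1 p i a * marg1 p j b.
Hypothesis W_diag : forall i, W i i = (mxadj (psi i) *m psi i) 0 0.
Hypothesis W_twisted : forall i j a, i != j -> adj a i -> adj a j ->
  W i j = (mxadj (psi i) *m mxadj (Pmx R (pi a i)) *m Pmx R (pi a j) *m psi j) 0 0.

Section Inflation.
Hypothesis ndcs : NDCS adj.
Variable q : {ffun 'I_n * 'I_d -> O} -> R.
Hypothesis q_marg1 : forall x a, marg1 q x a = marg1 p x.1 a.
Hypothesis q_marg2 : forall x y, x.1 != y.1 -> infl_share adj pi x y ->
  forall a b, marg2 q x y a b = marg2 p x.1 y.1 a b.
Hypothesis q_indep : forall x y, x != y -> ~~ infl_share adj pi x y ->
  forall a b, marg2 q x y a b = marg1 q x a * marg1 q y b.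

(* Inflated parties whose joint marginal is that of two parties of [p]:
   equal ones, or copies of distinct parties sharing a source. *)
Definition infl_linked (x y : 'I_n * 'I_d) : bool :=
  (x == y) || ((x.1 != y.1) && infl_share adj pi x y).

Lemma inflated_moment (x y : 'I_n * 'I_d) :
  Ex q (fun w => (centred x.1 (w x))^* * centred y.1 (w y)) =
  if infl_linked x y then covmx p f x.1 y.1 else 0.
Proof.
rewrite /infl_linked; case: eqP => [<- | /eqP xy] /=; first exact: moment_marg1.
case: ifP => [/andP[x1y1 sh] | unlinked]; first exact: moment_marg2 (q_marg2 x1y1 sh).
have not_sh : ~~ infl_share adj pi x y.
  case: (eqVneq x.1 y.1) unlinked => [e _ | _ /= -> //].
  move: x y e xy => [i k] [j l] /= <-; rewrite xpair_eqE eqxx /=.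
  exact: infl_share_same_party.
exact: moment_indep (q_marg1 y) (q_indep xy not_sh).
Qed.

Definition infl_weight (v : 'cV[C]_n) (x : 'I_n * 'I_d) : C := v x.1 0 * psi x.1 x.2 0.

Lemma schur_entry_inflated (v : 'cV[C]_n) (i j : 'I_n) :
  (v i 0)^* * v j 0 * schur (covmx p f) W i j =
  \sum_k \sum_l (infl_weight v (i, k))^* * infl_weight v (j, l) *
     Ex q (fun w => (centred i (w (i, k)))^* * centred j (w (j, l))).
Proof.
under eq_bigr => k _ do under eq_bigr => l _ do
  rewrite (inflated_moment (i, k) (j, l)) /infl_linked /= xpair_eqE.
rewrite mxE; case: (eqVneq i j) => [<- | ij].
  under eq_bigr => k _ do under eq_bigr => l _ do rewrite /= orbF.
  rewrite W_diag gram_diag !mulr_sumr; apply: eq_bigr => k _.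
  rewrite (bigD1 k) //= eqxx big1 ?addr0 => [|l /negbTE lk]; last first.
    by rewrite eq_sym lk mulr0.
  by rewrite /infl_weight /= rmorphM; ring.
under eq_bigr => k _ do under eq_bigr => l _ do rewrite /=.
case: (boolP (share_src adj i j)) => [/existsP[a /andP[ai aj]] | nsh].
  under eq_bigr => k _ do under eq_bigr => l _ do
    rewrite (infl_share_via _ _ _ ndcs ij ai aj).
  rewrite (W_twisted ij ai aj) gram_twisted !mulr_sumr; apply: eq_bigr => k _.
  rewrite !mulr_sumr; apply: eq_bigr => l _.
  by case: (_ == _); rewrite /infl_weight /= rmorphM; ring.
rewrite (covmx_unlinked (p_C0 ij nsh)) mul0r mulr0 big1 // => k _; rewrite big1 // => l _.
by case: ifP => [/infl_share_src sh | _]; [rewrite sh in nsh | rewrite mulr0].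
Qed.

Lemma schur_form_inflated (v : 'cV[C]_n) :
  \sum_i \sum_j (v i 0)^* * v j 0 * schur (covmx p f) W i j =
  \sum_x \sum_y (infl_weight v x)^* * infl_weight v y *
     Ex q (fun w => (centred x.1 (w x))^* * centred y.1 (w y)).
Proof.
pose G x y := (infl_weight v x)^* * infl_weight v y *
  Ex q (fun w => (centred x.1 (w x))^* * centred y.1 (w y)).
transitivity (\sum_i \sum_k \sum_j \sum_l G (i, k) (j, l)).
  by apply: eq_bigr => i _; rewrite exchange_big; apply: eq_bigr => j _;
     rewrite schur_entry_inflated.
rewrite pair_big; apply: eq_bigr => -[i k] _ /=.
by rewrite pair_big; apply: eq_bigr => -[j l] _.
Qed.

End Inflation.

Section SmallOrder.
Hypothesis d_small : (d < 2)%N.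

(* For d < 2 the rank-one factor of W absorbed into the coefficients. *)
Definition collapsed_weight (v : 'cV[C]_n) (i : 'I_n) : C := v i 0 * \sum_k psi i k 0.

Lemma schur_entry_small (v : 'cV[C]_n) (i j : 'I_n) :
  (v i 0)^* * v j 0 * schur (covmx p f) W i j =
  (collapsed_weight v i)^* * collapsed_weight v j * covmx p f i j.
Proof.
rewrite mxE; case: (eqVneq i j) => [<- | ij].
  by rewrite W_diag gram_diag gram_diag_small // /collapsed_weight rmorphM; ring.
case: (boolP (share_src adj i j)) => [/existsP[a /andP[ai aj]] | nsh].
  rewrite (W_twisted ij ai aj) gram_twisted gram_twisted_small //.
  by rewrite /collapsed_weight rmorphM; ring.
by rewrite (covmx_unlinked (p_C0 ij nsh)) !(mul0r, mulr0).
Qed.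

End SmallOrder.
End TwistedGram.
End CentredModel.

Theorem lemma6 (R : realType) (m n : nat) (adj : 'I_m -> 'I_n -> bool)
  (O : finType) (p : {ffun 'I_n -> O} -> R) (f : 'I_n -> O -> R[i])
  (d : nat) (psi : 'I_n -> 'cV[R[i]]_d) (pi : 'I_m -> 'I_n -> {perm 'I_d})
  (W : 'M[R[i]]_n) :
  network adj -> NDCS adj -> causally_consistent adj p ->
  twisted_gram adj psi pi W ->
  psd (schur (covmx p f) W).
Proof.
move=> _ ndcs [p_dist [p_C0 inflations]] [_ W_diag W_twisted] v.
rewrite mxadj_form; case: (leqP 2 d) => [d_big | d_small].
  have [q [[q_ge0 _] [q_marg1 [q_marg2 q_indep]]]] := inflations d d_big pi.
  rewrite (schur_form_inflated f p_dist p_C0 W_diag W_twisted ndcs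
             q_marg1 q_marg2 q_indep).
  exact: (Ex_gram_ge0 (fun x => centred p f x.1) _ q_ge0).
under eq_bigr => i _ do under eq_bigr => j _ do
  rewrite (schur_entry_small f p_dist p_C0 W_diag W_twisted d_small) covmx_centred //.
by case: p_dist => p_ge0 _; exact: Ex_gram_ge0.
Qed.
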